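(* Let $\Omega$ be a standard star graph and let $f$ be a generic eigenfunction of $\Omega$ with eigenvalue $k^2$ ($k>0$). Assume $f$ has no Neumann points. Then there exists a standard star graph $\widetilde\Omega$ such that: (1) $|\partial\Omega|=|\partial\widetilde\Omega|$; (2) there is a generic eigenfunction $\tilde f$ of $\widetilde\Omega$ with eigenvalue $k^2$; (3) $\tilde f$ has no Neumann points, so $\widetilde\Omega$ is its single Neumann domain; (4) $N(\Omega)+N(\widetilde\Omega)=|\partial\Omega|$ and $\rho(\Omega)+\rho(\widetilde\Omega)=|\partial\Omega|$, where spectral positions and wavelength capacities are taken with respect to $k$.
   Context: A star graph consists of a central vertex joined by edges to degree-one vertices; regarded as a standard graph it carries the Laplacian $-d^2/dx^2$ with Neumann (Kirchhoff) vertex conditions (continuity and vanishing sum of outgoing derivatives). $\partial\Omega$ is the set of degree-one vertices. An eigenfunction is generic if its eigenvalue is simple, it is nonzero at every vertex, and its outgoing derivatives at the non-boundary vertices are nonzero. Neumann points of $f$ are points in edge interiors where $f'=0$. For a graph $\Omega$ with total edge length $|\Omega|$: $N(\Omega):=|\{0\le\lambda<k^2:\lambda\text{ eigenvalue of }\Omega\}|$ (with multiplicity) and $\rho(\Omega):=|\Omega|k/\pi$. *)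

From Stdlib Require Import Reals Lra List.
From Coquelicot Require Import Coquelicot.
Open Scope R_scope.

(** A star graph with [m] edges: edge [i] (for [i < m]) has length [l i] and is
    parametrised by [x ∈ [0, l i]], where [x = 0] is the degree-one (boundary)
    vertex and [x = l i] is the central vertex.  A function on the graph is
    [f : nat -> R -> R], [f i] being its restriction to edge [i]; only the
    values on [[0, l i]] matter. *)

Definition star_graph (m : nat) (l : nat -> R) : Prop :=
  (2 <= m)%nat /\ forall i, (i < m)%nat -> 0 < l i.

Definition sumR (m : nat) (g : nat -> R) : R :=
  fold_right Rplus 0 (map g (seq 0 m)).

Definition total_length (m : nat) (l : nat -> R) : R := sumR m l.

(** [f] solves -f'' = lam f on every edge, with standard (Neumann/Kirchhoff)
    vertex conditions: f'(0) = 0 at each degree-one vertex, continuity at the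
    centre, and the sum of the outgoing derivatives (-f_i'(l_i)) at the centre
    is zero.  (The zero function is allowed: this describes the eigenspace.) *)
Definition eig_solution (m : nat) (l : nat -> R) (lam : R) (f : nat -> R -> R) : Prop :=
  (forall i x, (i < m)%nat -> 0 <= x <= l i ->
     ex_derive (f i) x /\ ex_derive (Derive (f i)) x /\
     - Derive_n (f i) 2 x = lam * f i x) /\
  (forall i, (i < m)%nat -> Derive (f i) 0 = 0) /\
  (forall i j, (i < m)%nat -> (j < m)%nat -> f i (l i) = f j (l j)) /\
  sumR m (fun i => - Derive (f i) (l i)) = 0.

Definition nonzero_on (m : nat) (l : nat -> R) (f : nat -> R -> R) : Prop :=
  exists i x, (i < m)%nat /\ 0 <= x <= l i /\ f i x <> 0.

Definition is_eigenfunction (m : nat) (l : nat -> R) (lam : R) (f : nat -> R -> R) : Prop :=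
  eig_solution m l lam f /\ nonzero_on m l f.

Definition is_eigenvalue (m : nat) (l : nat -> R) (lam : R) : Prop :=
  exists f, is_eigenfunction m l lam f.

Definition lin_indep (m : nat) (l : nat -> R) (d : nat) (g : nat -> nat -> R -> R) : Prop :=
  forall c : nat -> R,
    (forall i x, (i < m)%nat -> 0 <= x <= l i ->
        sumR d (fun j => c j * g j i x) = 0) ->
    forall j, (j < d)%nat -> c j = 0.

Definition multiplicity (m : nat) (l : nat -> R) (lam : R) (d : nat) : Prop :=
  (exists g, (forall j, (j < d)%nat -> eig_solution m l lam (g j)) /\ lin_indep m l d g) /\
  ~ (exists g, (forall j, (j < S d)%nat -> eig_solution m l lam (g j)) /\ lin_indep m l (S d) g).

Definition simple_eigenvalue (m : nat) (l : nat -> R) (lam : R) : Prop :=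
  multiplicity m l lam 1.

(** Generic eigenfunction: simple eigenvalue, nonzero at every vertex,
    nonzero outgoing derivatives at the (only) non-boundary vertex, the centre. *)
Definition generic_eigenfunction (m : nat) (l : nat -> R) (lam : R) (f : nat -> R -> R) : Prop :=
  is_eigenfunction m l lam f /\
  simple_eigenvalue m l lam /\
  (forall i, (i < m)%nat -> f i 0 <> 0) /\
  (forall i, (i < m)%nat -> f i (l i) <> 0) /\
  (forall i, (i < m)%nat -> - Derive (f i) (l i) <> 0).

Definition is_neumann_point (m : nat) (l : nat -> R) (f : nat -> R -> R) (i : nat) (x : R) : Prop :=
  (i < m)%nat /\ 0 < x < l i /\ Derive (f i) x = 0.

Definition no_neumann_points (m : nat) (l : nat -> R) (f : nat -> R -> R) : Prop :=
  forall i x, ~ is_neumann_point m l f i x.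

Definition spectral_position (m : nat) (l : nat -> R) (k : R) (n : nat) : Prop :=
  exists (lams : list R) (ds : list nat),
    NoDup lams /\
    (forall lam, In lam lams <-> (0 <= lam < k ^ 2 /\ is_eigenvalue m l lam)) /\
    length ds = length lams /\
    (forall j, (j < length lams)%nat -> multiplicity m l (nth j lams 0) (nth j ds 0%nat)) /\
    n = fold_right Nat.add 0%nat ds.

Definition wavelength_capacity (m : nat) (l : nat -> R) (k : R) : R :=
  total_length m l * k / PI.

(** |∂Omega| for a star graph with m >= 2 edges is m. *)
Definition num_boundary (m : nat) : nat := m.

(* On each edge an eigenfunction for [k^2] with Neumann condition at the leaf is [a_i cos (k x)].
   The absence of Neumann points and [f' <> 0] at the centre force [k l_i < PI], and the vertex
   conditions reduce to the secular equation [sum_i tan (k l_i) = 0].  Replacing every [l_i] by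
   [PI/k - l_i] negates each [tan (k l_i)], so the reflected star satisfies the same equation and
   carries an eigenfunction of the same kind.
   On a star with all [k l_i < PI] the eigenvalues [mu^2 < k^2] are the roots of
   [F mu = sum_i tan (mu l_i)], simple and one on every increasing branch of [F] but the last, and
   the poles [mu l_i = PI/2], of multiplicity one less than the number of edges sharing the pole.
   Counting branch by branch gives [N = #{i | k l_i > PI/2}]; as [k l_i <> PI/2], the counts of
   the two stars add up to [m], and [|Omega| + |Omega~| = m PI / k]. *)

From Stdlib Require Import Reals Lra Lia List Classical Wf_nat.
From Coquelicot Require Import Coquelicot.
Open Scope R_scope.

Lemma sumR_S m g : sumR (S m) g = sumR m g + g m.
Proof.
  unfold sumR. rewrite seq_S, map_app, fold_right_app. simpl.
  generalize (map g (seq 0 m)). induction l; simpl; [ring | rewrite IHl; ring].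
Qed.

Lemma sumR_shift m g : sumR (S m) g = g 0%nat + sumR m (fun t => g (S t)).
Proof. unfold sumR. simpl. rewrite <- seq_shift, map_map. reflexivity. Qed.

Lemma sumR_ext m g h : (forall i, (i < m)%nat -> g i = h i) -> sumR m g = sumR m h.
Proof. induction m; intros H; [reflexivity |]. rewrite !sumR_S, IHm, H; auto. Qed.

Lemma sumR_plus m g h : sumR m (fun i => g i + h i) = sumR m g + sumR m h.
Proof. induction m; [unfold sumR; simpl; ring |]. rewrite !sumR_S, IHm. ring. Qed.

Lemma sumR_scal_l m c g : sumR m (fun i => c * g i) = c * sumR m g.
Proof. induction m; [unfold sumR; simpl; ring |]. rewrite !sumR_S, IHm. ring. Qed.

Lemma sumR_scal_r m c g : sumR m (fun i => g i * c) = sumR m g * c.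
Proof. induction m; [unfold sumR; simpl; ring |]. rewrite !sumR_S, IHm. ring. Qed.

Lemma sumR_opp m g : sumR m (fun i => - g i) = - sumR m g.
Proof. induction m; [unfold sumR; simpl; ring |]. rewrite !sumR_S, IHm. ring. Qed.

Lemma sumR_const m c : sumR m (fun _ => c) = INR m * c.
Proof. induction m; [unfold sumR; simpl; ring |]. rewrite sumR_S, IHm, S_INR. ring. Qed.

Lemma sumR_eq0 m g : (forall i, (i < m)%nat -> g i = 0) -> sumR m g = 0.
Proof. intros H. rewrite (sumR_ext m g (fun _ => 0)), sumR_const by auto. ring. Qed.

Lemma sumR_swap d r (F : nat -> nat -> R) :
  sumR d (fun j => sumR r (fun s => F j s)) = sumR r (fun s => sumR d (fun j => F j s)).
Proof.
  induction d.
  - symmetry. apply sumR_eq0. reflexivity.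
  - rewrite sumR_S, IHd, <- sumR_plus. apply sumR_ext. intros. rewrite sumR_S. reflexivity.
Qed.

Lemma sumR_delta m j h :
  (j < m)%nat -> sumR m (fun i => if Nat.eq_dec i j then h i else 0) = h j.
Proof.
  induction m; intros Hj; [lia |]. rewrite sumR_S. destruct (Nat.eq_dec m j).
  - subst. rewrite sumR_eq0; [ring |]. intros i Hi. destruct (Nat.eq_dec i j); [lia | auto].
  - rewrite IHm by lia. ring.
Qed.

Lemma sumR_swap_last n h j0 : (j0 < S n)%nat ->
  sumR (S n) h = sumR n (fun j => h (if Nat.eq_dec j j0 then n else j)) + h j0.
Proof.
  intros Hj. rewrite sumR_S. destruct (Nat.eq_dec j0 n).
  - subst j0. rewrite (sumR_ext n (fun j => h (if Nat.eq_dec j n then n else j)) h); [ring |].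
    intros i Hi. destruct (Nat.eq_dec i n); [lia | auto].
  - rewrite (sumR_ext n (fun j => h (if Nat.eq_dec j j0 then n else j))
                        (fun j => h j + (if Nat.eq_dec j j0 then h n - h j0 else 0))).
    + rewrite sumR_plus, sumR_delta by lia. ring.
    + intros i Hi. destruct (Nat.eq_dec i j0); [subst |]; ring.
Qed.

Lemma sumR_le m g h : (forall i, (i < m)%nat -> g i <= h i) -> sumR m g <= sumR m h.
Proof.
  induction m; intros H; [unfold sumR; simpl; lra |].
  rewrite !sumR_S. assert (g m <= h m) by auto. assert (sumR m g <= sumR m h) by auto. lra.
Qed.

Lemma sumR_lt m g h :
  (0 < m)%nat -> (forall i, (i < m)%nat -> g i < h i) -> sumR m g < sumR m h.
Proof.
  intros Hm H. destruct m as [|m]; [lia |]. rewrite !sumR_S.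
  assert (g m < h m) by auto.
  assert (sumR m g <= sumR m h) by (apply sumR_le; intros; left; auto). lra.
Qed.

Lemma sumR_gt0 m g : (0 < m)%nat -> (forall i, (i < m)%nat -> 0 < g i) -> 0 < sumR m g.
Proof. intros Hm H. rewrite <- (sumR_eq0 m (fun _ => 0)) by auto. apply sumR_lt; auto. Qed.

Lemma sumR_ge_term m g j :
  (forall i, (i < m)%nat -> 0 <= g i) -> (j < m)%nat -> g j <= sumR m g.
Proof.
  intros H Hj. rewrite <- (sumR_delta m j g) by exact Hj. apply sumR_le.
  intros i Hi. destruct (Nat.eq_dec i j); [lra | auto].
Qed.

Lemma sumR_continuity_pt m (g : nat -> R -> R) x :
  (forall i, (i < m)%nat -> continuity_pt (g i) x) ->
  continuity_pt (fun y => sumR m (fun i => g i y)) x.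
Proof.
  induction m; intros H.
  - apply continuity_pt_const. intros a b. reflexivity.
  - apply (continuity_pt_ext (fun y => sumR m (fun i => g i y) + g m y)).
    + intros. rewrite sumR_S. reflexivity.
    + apply (continuity_pt_plus (fun y => sumR m (fun i => g i y)) (g m)); auto.
Qed.

Definition sumL (h : nat -> R) (s : list nat) : R := fold_right Rplus 0 (map h s).

Lemma sumL_filter h P s : sumL h (filter P s) = sumL (fun i => if P i then h i else 0) s.
Proof.
  induction s as [|a s IH]; [reflexivity |]. unfold sumL in *. simpl.
  destruct (P a); simpl; rewrite IH; ring.
Qed.

Lemma sumR_nth h js : sumR (length js) (fun t => h (nth t js 0%nat)) = sumL h js.
Proof.
  induction js; [reflexivity |]. simpl length. rewrite sumR_shift. simpl. rewrite IHjs. reflexivity.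
Qed.

Lemma many_vectors_dependent D : forall n, (D < n)%nat -> forall v : nat -> nat -> R,
  exists c : nat -> R, (exists j, (j < n)%nat /\ c j <> 0) /\
    forall t, (t < D)%nat -> sumR n (fun j => c j * v j t) = 0.
Proof.
  induction D as [|D IH]; intros n Hn v.
  { exists (fun _ => 1). split; [exists 0%nat; split; [lia | lra] | intros; lia]. }
  destruct (classic (exists j0, (j0 < n)%nat /\ v j0 D <> 0)) as [[j0 [Hj0 Hv]] | Hall].
  - (* Gaussian elimination of coordinate [D] using the pivot [v j0]. *)
    destruct n as [|n]; [lia |].
    set (sw := fun j => if Nat.eq_dec j j0 then n else j).
    set (beta := fun j => v (sw j) D / v j0 D).
    destruct (IH n ltac:(lia) (fun j t => v (sw j) t - beta j * v j0 t))
      as [c [[j1 [Hj1 Hc1]] Hc]].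
    set (c' := fun i => if Nat.eq_dec i j0 then - sumR n (fun j => c j * beta j)
                        else if Nat.eq_dec i n then c j0 else c i).
    assert (Hsw : forall j, (j < n)%nat -> c' (sw j) = c j).
    { intros j Hj. unfold c', sw. destruct (Nat.eq_dec j j0).
      - subst. destruct (Nat.eq_dec n j0); [lia |]. destruct (Nat.eq_dec n n); [auto | lia].
      - destruct (Nat.eq_dec j j0); [lia |]. destruct (Nat.eq_dec j n); [lia | auto]. }
    exists c'. split.
    + exists (sw j1). split; [unfold sw; destruct (Nat.eq_dec j1 j0); lia |]. rewrite Hsw; auto.
    + intros t Ht. rewrite sumR_swap_last with (j0 := j0) by exact Hj0.
      rewrite (sumR_ext n _ (fun j => c j * (v (sw j) t - beta j * v j0 t) + c j * beta j * v j0 t))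
        by (intros j Hj; fold (sw j); rewrite Hsw by exact Hj; ring).
      rewrite sumR_plus, sumR_scal_r.
      assert (Hel : sumR n (fun j => c j * (v (sw j) t - beta j * v j0 t)) = 0).
      { destruct (Nat.eq_dec t D) as [->|]; [| apply Hc; lia].
        apply sumR_eq0. intros j Hj. unfold beta. field. exact Hv. }
      unfold c'. destruct (Nat.eq_dec j0 j0); [| lia]. rewrite Hel. ring.
  - destruct (IH n ltac:(lia) v) as [c [Hnz Hc]]. exists c. split; [exact Hnz |].
    intros t Ht. destruct (Nat.eq_dec t D) as [->|]; [| apply Hc; lia].
    apply sumR_eq0. intros j Hj. destruct (Req_dec (v j D) 0) as [E|E].
    + rewrite E. ring.
    + exfalso. apply Hall. eauto.
Qed.

Lemma zero_derivative_const h a b :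
  (forall x, a <= x <= b -> is_derive h x 0) -> forall x, a <= x <= b -> h x = h a.
Proof.
  intros H x Hx. destruct (Req_dec x a) as [->|Hxa]; [reflexivity |].
  assert (Hab : forall y, Rmin a x <= y <= Rmax a x -> a <= y <= b)
    by (rewrite Rmin_left, Rmax_right by lra; intros; lra).
  destruct (MVT_gen h a x (fun _ => 0)) as [c [_ Hc]].
  - intros y Hy. apply H, Hab. lra.
  - intros y Hy. apply continuity_pt_filterlim, (ex_derive_continuous h y).
    exists 0. apply H, Hab, Hy.
  - lra.
Qed.

Lemma Derive_scal_cos a mu y : Derive (fun x => a * cos (mu * x)) y = - a * mu * sin (mu * y).
Proof. apply is_derive_unique. auto_derive; [exact I | ring]. Qed.

(* The energy [(g' + g0 mu sin)^2 + mu^2 (g - g0 cos)^2] is constant and vanishes at 0. *)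
Lemma cos_of_neumann_edge (g : R -> R) mu L :
  (forall x, 0 <= x <= L ->
     ex_derive g x /\ ex_derive (Derive g) x /\ - Derive_n g 2 x = mu ^ 2 * g x) ->
  Derive g 0 = 0 ->
  forall x, 0 <= x <= L -> g x = g 0 * cos (mu * x) /\ Derive g x = - g 0 * mu * sin (mu * x).
Proof.
  intros H H0.
  set (E := fun x => (Derive g x + g 0 * mu * sin (mu * x)) ^ 2
                     + mu ^ 2 * (g x - g 0 * cos (mu * x)) ^ 2).
  assert (HE : forall x, 0 <= x <= L -> is_derive E x 0).
  { intros x Hx. destruct (H x Hx) as [H1 [H2 H3]].
    assert (H2' : Derive (fun y => Derive g y) x = - (mu ^ 2 * g x))
      by (change (Derive_n g 2 x = - (mu ^ 2 * g x)); lra).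
    unfold E. auto_derive; [repeat split; auto |].
    rewrite H2'. change (Derive (fun y => g y) x) with (Derive g x). ring. }
  assert (HE0 : E 0 = 0) by (unfold E; rewrite H0, Rmult_0_r, sin_0, cos_0; ring).
  assert (HD : forall x, 0 <= x <= L -> Derive g x = - g 0 * mu * sin (mu * x)).
  { intros x Hx. pose proof (zero_derivative_const E 0 L HE x Hx) as Ex.
    rewrite HE0 in Ex. unfold E in Ex.
    assert (0 <= mu ^ 2 * (g x - g 0 * cos (mu * x)) ^ 2)
      by (apply Rmult_le_pos; apply pow2_ge_0).
    pose proof (pow2_ge_0 (Derive g x + g 0 * mu * sin (mu * x))).
    assert (Hsq : Rsqr (Derive g x + g 0 * mu * sin (mu * x)) = 0) by (rewrite Rsqr_pow2; lra).
    apply Rsqr_0_uniq in Hsq. lra. }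
  set (h := fun x => g x - g 0 * cos (mu * x)).
  assert (Hh : forall x, 0 <= x <= L -> is_derive h x 0).
  { intros x Hx. destruct (H x Hx) as [H1 _]. unfold h. auto_derive; [exact H1 |].
    rewrite HD by exact Hx. ring. }
  intros x Hx. split; [| apply HD, Hx].
  pose proof (zero_derivative_const h 0 L Hh x Hx) as Hhx.
  unfold h in Hhx. rewrite Rmult_0_r, cos_0 in Hhx. lra.
Qed.

(* [a i] is the amplitude of [a i * cos (mu * x)] on edge [i]; the clauses are continuity and the
   Kirchhoff condition at the centre. *)
Definition amplitude_conditions (m : nat) (l : nat -> R) (mu : R) (a : nat -> R) : Prop :=
  (forall i j, (i < m)%nat -> (j < m)%nat -> a i * cos (mu * l i) = a j * cos (mu * l j)) /\
  sumR m (fun i => a i * (mu * sin (mu * l i))) = 0.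

Lemma eig_solution_cos m l mu f :
  (forall i, (i < m)%nat -> 0 <= l i) -> eig_solution m l (mu ^ 2) f ->
  (forall i x, (i < m)%nat -> 0 <= x <= l i ->
     f i x = f i 0 * cos (mu * x) /\ Derive (f i) x = - f i 0 * mu * sin (mu * x)) /\
  amplitude_conditions m l mu (fun i => f i 0).
Proof.
  intros Hl [Hode [Hneu [Hcont Hkir]]].
  assert (Hcos : forall i x, (i < m)%nat -> 0 <= x <= l i ->
     f i x = f i 0 * cos (mu * x) /\ Derive (f i) x = - f i 0 * mu * sin (mu * x))
    by (intros i x Hi; apply cos_of_neumann_edge; auto).
  assert (Hend : forall i, (i < m)%nat -> 0 <= l i <= l i)
    by (intros i Hi; specialize (Hl i Hi); lra).
  split; [exact Hcos | split].
  - intros i j Hi Hj.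
    rewrite <- (proj1 (Hcos i _ Hi (Hend i Hi))), <- (proj1 (Hcos j _ Hj (Hend j Hj))). auto.
  - transitivity (sumR m (fun i => - Derive (f i) (l i))); [| exact Hkir].
    apply sumR_ext. intros i Hi. rewrite (proj2 (Hcos i _ Hi (Hend i Hi))). ring.
Qed.

Lemma eig_solution_of_amplitudes m l mu a :
  amplitude_conditions m l mu a -> eig_solution m l (mu ^ 2) (fun i x => a i * cos (mu * x)).
Proof.
  intros [Hcont Hkir]. split; [| split; [| split]].
  - intros i x Hi Hx. split; [| split].
    + auto_derive. exact I.
    + eapply ex_derive_ext; [intros y; symmetry; apply Derive_scal_cos |]. auto_derive. exact I.
    + simpl. rewrite (Derive_ext _ (fun y => - a i * mu * sin (mu * y)))
        by (intros; apply Derive_scal_cos).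
      rewrite (is_derive_unique _ x (- a i * mu * (mu * cos (mu * x)))); [ring |].
      auto_derive; [exact I | ring].
  - intros i Hi. rewrite Derive_scal_cos, Rmult_0_r, sin_0. ring.
  - exact Hcont.
  - rewrite <- Hkir. apply sumR_ext. intros i Hi. rewrite Derive_scal_cos. ring.
Qed.

(* The [a t] form a basis of the amplitude vectors, with coordinate functionals
   [b |-> b (idx t)]. *)
Lemma multiplicity_of_amplitude_basis m l mu d (a : nat -> nat -> R) (idx : nat -> nat) :
  (forall i, (i < m)%nat -> 0 <= l i) ->
  (forall t, (t < d)%nat -> (idx t < m)%nat) ->
  (forall t, (t < d)%nat -> amplitude_conditions m l mu (a t)) ->
  (forall s t, (s < d)%nat -> (t < d)%nat -> a t (idx s) = if Nat.eq_dec t s then 1 else 0) ->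
  (forall b, amplitude_conditions m l mu b ->
     forall i, (i < m)%nat -> b i = sumR d (fun t => b (idx t) * a t i)) ->
  multiplicity m l (mu ^ 2) d.
Proof.
  intros Hl Hidx Ha Hdelta Hspan. split.
  - exists (fun t i x => a t i * cos (mu * x)). split.
    + intros t Ht. apply eig_solution_of_amplitudes, Ha, Ht.
    + intros c Hc s Hs. specialize (Hl _ (Hidx s Hs)).
      rewrite <- (Hc (idx s) 0 (Hidx s Hs) ltac:(lra)), <- (sumR_delta d s c) by exact Hs.
      apply sumR_ext. intros t Ht. rewrite Rmult_0_r, cos_0, Hdelta by assumption.
      destruct (Nat.eq_dec t s); ring.
  - intros [g [Hg Hindep]].
    assert (Hcos := fun j Hj => eig_solution_cos m l mu (g j) Hl (Hg j Hj)).
    destruct (many_vectors_dependent d (S d) ltac:(lia) (fun j t => g j (idx t) 0))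
      as [c [[j0 [Hj0 Hc0]] Hc]].
    apply Hc0, Hindep; [| exact Hj0]. intros i x Hi Hx.
    rewrite (sumR_ext _ _
               (fun j => cos (mu * x) * sumR d (fun t => a t i * (c j * g j (idx t) 0)))).
    2:{ intros j Hj. destruct (Hcos j Hj) as [Hform Hamp].
        rewrite (proj1 (Hform i x Hi Hx)), (Hspan _ Hamp i Hi), <- !sumR_scal_l.
        rewrite <- sumR_scal_r, <- sumR_scal_l. apply sumR_ext. intros. ring. }
    rewrite sumR_scal_l, sumR_swap, sumR_eq0; [ring |].
    intros t Ht. rewrite sumR_scal_l, Hc by exact Ht. ring.
Qed.

Lemma multiplicity_is_eigenvalue m l lam d :
  multiplicity m l lam d -> (is_eigenvalue m l lam <-> (1 <= d)%nat).
Proof.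
  intros [[g [Hg Hindep]] Hmax]. split.
  - intros [f [Hf [i [x [Hi [Hx Hfx]]]]]]. destruct d; [exfalso | lia]. apply Hmax.
    exists (fun _ => f). split; [auto |].
    intros c Hc j Hj. assert (j = 0%nat) as -> by lia.
    specialize (Hc i x Hi Hx). unfold sumR in Hc. simpl in Hc. rewrite Rplus_0_r in Hc.
    apply Rmult_integral in Hc. lra.
  - intros Hd. exists (g 0%nat). split; [apply Hg; lia |].
    apply NNPP. intros Hz.
    assert (H1 : (if Nat.eq_dec 0 0 then 1 else 0) = 0).
    { apply (Hindep (fun j => if Nat.eq_dec j 0 then 1 else 0)); [| lia].
      intros i x Hi Hx.
      rewrite (sumR_ext d _ (fun j => if Nat.eq_dec j 0 then g j i x else 0))
        by (intros j _; destruct (Nat.eq_dec j 0); ring).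
      rewrite sumR_delta by lia.
      apply NNPP. intros Hne. apply Hz. exists i, x. auto. }
    simpl in H1. lra.
Qed.

Definition secular (m : nat) (l : nat -> R) (mu : R) : R := sumR m (fun i => tan (mu * l i)).

Lemma amplitude_conditions_regular m l mu b :
  (0 < m)%nat -> (forall i, (i < m)%nat -> cos (mu * l i) <> 0) ->
  amplitude_conditions m l mu b ->
  (forall i, (i < m)%nat -> b i = b 0%nat * cos (mu * l 0%nat) / cos (mu * l i)) /\
  b 0%nat * cos (mu * l 0%nat) * mu * secular m l mu = 0.
Proof.
  intros Hm Hcos [Hcont Hkir].
  assert (Hb : forall i, (i < m)%nat -> b i = b 0%nat * cos (mu * l 0%nat) / cos (mu * l i))
    by (intros i Hi; rewrite (Hcont 0%nat i Hm Hi); field; auto).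
  split; [exact Hb |]. rewrite <- Hkir. unfold secular. rewrite <- sumR_scal_l.
  apply sumR_ext. intros i Hi. rewrite (Hb i Hi). unfold tan. field. auto.
Qed.

Lemma multiplicity_regular_root m l mu :
  (0 < m)%nat -> (forall i, (i < m)%nat -> 0 <= l i) ->
  (forall i, (i < m)%nat -> cos (mu * l i) <> 0) ->
  secular m l mu = 0 -> multiplicity m l (mu ^ 2) 1.
Proof.
  intros Hm Hl Hcos HF.
  apply (multiplicity_of_amplitude_basis m l mu 1
           (fun _ i => cos (mu * l 0%nat) / cos (mu * l i)) (fun _ => 0%nat) Hl).
  - intros; exact Hm.
  - intros t Ht. split; cbv beta.
    + intros i j Hi Hj. field. auto.
    + transitivity (cos (mu * l 0%nat) * mu * secular m l mu); [| rewrite HF; ring].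
      unfold secular. rewrite <- sumR_scal_l.
      apply sumR_ext. intros i Hi. unfold tan. field. auto.
  - intros s t Hs Ht. replace s with 0%nat by lia. replace t with 0%nat by lia.
    simpl. field. auto.
  - intros b Hb i Hi. unfold sumR. simpl.
    rewrite (proj1 (amplitude_conditions_regular m l mu b Hm Hcos Hb) i Hi). field. auto.
Qed.

Lemma multiplicity_regular_nonroot m l mu :
  (0 < m)%nat -> (forall i, (i < m)%nat -> 0 <= l i) ->
  (forall i, (i < m)%nat -> cos (mu * l i) <> 0) -> mu <> 0 ->
  secular m l mu <> 0 -> multiplicity m l (mu ^ 2) 0.
Proof.
  intros Hm Hl Hcos Hmu HF.
  apply (multiplicity_of_amplitude_basis m l mu 0 (fun _ _ => 0) (fun _ => 0%nat) Hl);
    try (intros; lia).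
  intros b Hb i Hi. destruct (amplitude_conditions_regular m l mu b Hm Hcos Hb) as [Hform H0].
  rewrite Hform by exact Hi. unfold sumR. simpl.
  apply Rmult_integral in H0 as [H0 | H0]; [| contradiction].
  apply Rmult_integral in H0 as [H0 | H0]; [| contradiction]. rewrite H0. unfold Rdiv. ring.
Qed.

Definition poleb (mu : R) (l : nat -> R) (i : nat) : bool :=
  if Req_dec_T (mu * l i) (PI / 2) then true else false.

Section PoleMultiplicity.

Variables (m : nat) (l : nat -> R) (mu : R) (j0 : nat) (js : list nat).
Hypothesis Hl : forall i, (i < m)%nat -> 0 <= l i.
Hypothesis Hcos : forall i, (i < m)%nat -> mu * l i <> PI / 2 -> cos (mu * l i) <> 0.
Hypothesis Hpoles : filter (poleb mu l) (seq 0 m) = j0 :: js.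

Lemma In_poles i : In i (j0 :: js) <-> (i < m)%nat /\ mu * l i = PI / 2.
Proof.
  rewrite <- Hpoles, filter_In, in_seq. unfold poleb.
  destruct (Req_dec_T (mu * l i) (PI / 2)); intuition (try lia; try discriminate).
Qed.

Lemma NoDup_poles : NoDup (j0 :: js).
Proof. rewrite <- Hpoles. apply NoDup_filter, seq_NoDup. Qed.

Let pj t := nth t js 0%nat.

Lemma pj_spec t : (t < length js)%nat -> (pj t < m)%nat /\ mu * l (pj t) = PI / 2 /\ pj t <> j0.
Proof.
  intros Ht. assert (Hin : In (pj t) js) by (apply nth_In, Ht).
  destruct (proj1 (In_poles (pj t)) (or_intror Hin)) as [Hm Hp].
  repeat split; auto. intros E. pose proof NoDup_poles as HND. inversion HND. congruence.
Qed.

Lemma pj_inj s t : (s < length js)%nat -> (t < length js)%nat -> pj s = pj t -> s = t.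
Proof. intros Hs Ht E. pose proof NoDup_poles as HND. inversion HND. eapply NoDup_nth; eauto. Qed.

Lemma j0_spec : (j0 < m)%nat /\ mu * l j0 = PI / 2.
Proof. apply In_poles. left. reflexivity. Qed.

Let basis t i := (if Nat.eq_dec i (pj t) then 1 else 0) - (if Nat.eq_dec i j0 then 1 else 0).

Lemma basis_amplitude_conditions t :
  (t < length js)%nat -> amplitude_conditions m l mu (basis t).
Proof.
  intros Ht. destruct (pj_spec t Ht) as [Hm [Hp Hne]]. destruct j0_spec as [Hm0 Hp0]. split.
  - assert (Z : forall i, (i < m)%nat -> basis t i * cos (mu * l i) = 0).
    { intros i Hi. unfold basis.
      destruct (Nat.eq_dec i (pj t)) as [->|]; [rewrite Hp, cos_PI2; ring |].
      destruct (Nat.eq_dec i j0) as [->|]; [rewrite Hp0, cos_PI2 |]; ring. }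
    intros i j Hi Hj. rewrite !Z; auto.
  - unfold basis.
    rewrite (sumR_ext _ _ (fun i => (if Nat.eq_dec i (pj t) then mu * sin (mu * l i) else 0)
                                   + - (if Nat.eq_dec i j0 then mu * sin (mu * l i) else 0)))
      by (intros i _; destruct (Nat.eq_dec i (pj t)), (Nat.eq_dec i j0); ring).
    rewrite sumR_plus, sumR_opp, !sumR_delta by assumption. rewrite Hp, Hp0. ring.
Qed.

Lemma basis_delta s t :
  (s < length js)%nat -> (t < length js)%nat -> basis t (pj s) = if Nat.eq_dec t s then 1 else 0.
Proof.
  intros Hs Ht. unfold basis. destruct (pj_spec s Hs) as [_ [_ Hne]].
  destruct (Nat.eq_dec (pj s) j0); [contradiction |].
  destruct (Nat.eq_dec (pj s) (pj t)) as [E|E], (Nat.eq_dec t s); subst; try ring.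
  - apply pj_inj in E; auto. lia.
  - contradiction.
Qed.

(* [cos (mu * l j0) = 0] forces the common centre value to vanish, and [sin] is [1] on poles. *)
Lemma pole_amplitudes b :
  amplitude_conditions m l mu b ->
  (forall i, (i < m)%nat -> mu * l i <> PI / 2 -> b i = 0) /\ b j0 + sumL b js = 0.
Proof.
  intros [Hcont Hkir]. destruct j0_spec as [Hm0 Hp0].
  assert (Hoff : forall i, (i < m)%nat -> mu * l i <> PI / 2 -> b i = 0).
  { intros i Hi Hn. pose proof (Hcont i j0 Hi Hm0) as E. rewrite Hp0, cos_PI2, Rmult_0_r in E.
    apply Rmult_integral in E as [E | E]; [exact E | exfalso; exact (Hcos i Hi Hn E)]. }
  split; [exact Hoff |].
  assert (Hmu : mu <> 0) by (intros ->; rewrite Rmult_0_l in Hp0; pose proof PI_RGT_0; lra).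
  apply (Rmult_eq_reg_l mu); [| exact Hmu]. rewrite Rmult_0_r, <- Hkir.
  change (b j0 + sumL b js) with (sumL b (j0 :: js)).
  rewrite <- Hpoles, sumL_filter.
  change (sumL ?g (seq 0 m)) with (sumR m g). rewrite <- sumR_scal_l.
  apply sumR_ext. intros i Hi. unfold poleb. destruct (Req_dec_T (mu * l i) (PI / 2)) as [E|E].
  - rewrite E, sin_PI2. ring.
  - rewrite Hoff by assumption. ring.
Qed.

Lemma pole_amplitudes_span b :
  amplitude_conditions m l mu b ->
  forall i, (i < m)%nat -> b i = sumR (length js) (fun t => b (pj t) * basis t i).
Proof.
  intros Hb i Hi. destruct (pole_amplitudes b Hb) as [Hoff Hsum].
  destruct (Req_dec_T (mu * l i) (PI / 2)) as [E|E].
  - destruct (proj2 (In_poles i) (conj Hi E)) as [<- | Hin].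
    + rewrite (sumR_ext _ _ (fun t => -1 * b (pj t))), sumR_scal_l; unfold pj.
      * rewrite sumR_nth. lra.
      * intros t Ht. destruct (pj_spec t Ht) as [_ [_ Hne]]. unfold basis.
        destruct (Nat.eq_dec j0 (pj t)); [congruence |].
        destruct (Nat.eq_dec j0 j0); [ring | congruence].
    + destruct (In_nth js i 0%nat Hin) as [s [Hs <-]]. fold (pj s).
      rewrite (sumR_ext _ _ (fun t => if Nat.eq_dec t s then b (pj s) else 0)).
      * rewrite sumR_delta; auto.
      * intros t Ht. rewrite basis_delta by assumption. destruct (Nat.eq_dec t s); subst; ring.
  - rewrite Hoff by assumption. symmetry. apply sumR_eq0. intros t Ht.
    destruct (pj_spec t Ht) as [_ [Hp _]]. destruct j0_spec as [_ Hp0]. unfold basis.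
    destruct (Nat.eq_dec i (pj t)); [subst; contradiction |].
    destruct (Nat.eq_dec i j0); [subst; contradiction | ring].
Qed.

Lemma multiplicity_pole : multiplicity m l (mu ^ 2) (length js).
Proof.
  apply (multiplicity_of_amplitude_basis m l mu (length js) basis pj Hl).
  - intros t Ht. apply pj_spec, Ht.
  - exact basis_amplitude_conditions.
  - exact basis_delta.
  - exact pole_amplitudes_span.
Qed.

End PoleMultiplicity.

Lemma tan_PI_minus x : tan (PI - x) = - tan x.
Proof.
  unfold tan. rewrite sin_PI_x, Rtrigo_facts.cos_pi_minus. unfold Rdiv. rewrite Rinv_opp. ring.
Qed.

Lemma tan_lt_same_branch x y :
  0 <= x -> x < y -> y < PI -> ~ (x <= PI / 2 <= y) -> tan x < tan y.
Proof.
  intros H0 Hxy Hy Hn. pose proof PI_RGT_0.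
  destruct (Rlt_dec y (PI / 2)); [apply tan_increasing; lra |].
  assert (tan (PI - y) < tan (PI - x)) as Hpi by (apply tan_increasing; lra).
  rewrite !tan_PI_minus in Hpi. lra.
Qed.

Lemma cos_neq_0_half_turn x : 0 <= x < PI -> x <> PI / 2 -> cos x <> 0.
Proof. intros Hx Hn E. apply Hn. apply cos_inj; try lra. rewrite E, cos_PI2. reflexivity. Qed.

Lemma tan_left_of_PI2_large M :
  0 < M -> exists d, 0 < d /\ forall y, 0 < y < d -> M < tan (PI / 2 - y).
Proof.
  intros HM. pose proof PI_RGT_0. exists (Rmin (PI / 3) (1 / (2 * M))). split.
  { apply Rmin_glb_lt; [lra | apply Rdiv_lt_0_compat; lra]. }
  intros y [Hy0 Hy].
  pose proof (Rmin_l (PI / 3) (1 / (2 * M))). pose proof (Rmin_r (PI / 3) (1 / (2 * M))).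
  unfold tan. rewrite sin_shift, cos_shift.
  (* [tan (PI/2 - y) = cos y / sin y >= (1/2) / y > M] *)
  assert (Hc : 1 / 2 <= cos y) by (rewrite <- cos_PI3; apply cos_decr_1; lra).
  assert (Hs : 0 < sin y) by (apply sin_gt_0; lra). pose proof (sin_lt_x y Hy0).
  assert (M * y < 1 / 2).
  { apply (Rmult_lt_reg_r (/ M)); [apply Rinv_0_lt_compat, HM |].
    replace (M * y * / M) with y by (field; lra).
    replace (1 / 2 * / M) with (1 / (2 * M)) by (field; lra). lra. }
  apply (Rmult_lt_reg_r (sin y)); [exact Hs |].
  unfold Rdiv. rewrite Rmult_assoc, Rinv_l by lra. nra.
Qed.

Lemma tan_right_of_PI2_large M :
  0 < M -> exists d, 0 < d /\ forall y, 0 < y < d -> tan (PI / 2 + y) < - M.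
Proof.
  intros HM. destruct (tan_left_of_PI2_large M HM) as [d [Hd H]]. exists d. split; [exact Hd |].
  intros y Hy. specialize (H y Hy). unfold tan in *. rewrite sin_shift, cos_shift in H.
  rewrite <- cos_sin. replace (cos (PI / 2 + y)) with (- sin y) by (rewrite sin_cos; ring).
  unfold Rdiv in *. rewrite Rinv_opp. lra.
Qed.

Lemma continuity_pt_tan_scal mu c : cos (mu * c) <> 0 -> continuity_pt (fun y => tan (y * c)) mu.
Proof.
  intros H. apply continuity_pt_filterlim, (ex_derive_continuous (fun y => tan (y * c))).
  unfold tan. auto_derive. exact H.
Qed.

Lemma continuity_pt_locally_bounded g x :
  continuity_pt g x -> exists d, 0 < d /\ forall y, Rabs (y - x) < d -> Rabs (g y) < Rabs (g x) + 1.
Proof.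
  intros H. destruct (H 1 Rlt_0_1) as [d [Hd Hy]]. exists d. split; [exact Hd |]. intros y Hyx.
  assert (Rabs (g y - g x) < 1).
  { destruct (Req_dec y x) as [->|Hne]; [rewrite Rminus_diag, Rabs_R0; lra |].
    apply Hy. split; [split; [exact I | auto] | exact Hyx]. }
  pose proof (Rabs_triang_inv (g y) (g x)). lra.
Qed.

Lemma finite_isolation (g : nat -> R) x m :
  exists e, 0 < e /\ forall i, (i < m)%nat -> g i <> x -> e <= Rabs (g i - x).
Proof.
  induction m as [|m [e [He H]]]; [exists 1; split; [lra | intros; lia] |].
  destruct (Req_dec (g m) x) as [E|E].
  - exists e. split; [exact He |]. intros i Hi Hn.
    destruct (Nat.eq_dec i m); [subst; contradiction |].
    apply H; [lia | exact Hn].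
  - exists (Rmin e (Rabs (g m - x))).
    split; [apply Rmin_glb_lt; [exact He | apply Rabs_pos_lt; lra] |].
    intros i Hi Hn. destruct (Nat.eq_dec i m) as [->|]; [apply Rmin_r |].
    eapply Rle_trans; [apply Rmin_l | apply H; [lia | exact Hn]].
Qed.

Lemma finite_argmax (g : nat -> R) (P : nat -> Prop) m :
  (exists i, (i < m)%nat /\ P i) ->
  exists i, (i < m)%nat /\ P i /\ forall j, (j < m)%nat -> P j -> g j <= g i.
Proof.
  induction m as [|m IH]; intros [i [Hi Pi]]; [lia |].
  destruct (classic (exists i, (i < m)%nat /\ P i)) as [Hex | Hno].
  - destruct (IH Hex) as [i0 [Hi0 [P0 Hmax]]].
    destruct (classic (P m /\ g i0 < g m)) as [[Pm Hlt] | Hn].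
    + exists m. split; [lia | split; [exact Pm |]]. intros j Hj Pj.
      destruct (Nat.eq_dec j m) as [->|]; [lra |]. specialize (Hmax j ltac:(lia) Pj). lra.
    + exists i0. split; [lia | split; [exact P0 |]]. intros j Hj Pj.
      destruct (Nat.eq_dec j m) as [->|]; [| apply Hmax; [lia | exact Pj]].
      destruct (Rle_dec (g m) (g i0)); [assumption | exfalso; apply Hn; split; [exact Pj | lra]].
  - assert (i = m) as ->.
    { destruct (Nat.eq_dec i m); [assumption | exfalso].
      apply Hno. exists i. split; [lia | exact Pi]. }
    exists m. split; [lia | split; [exact Pi |]].
    intros j Hj Pj. destruct (Nat.eq_dec j m) as [->|]; [lra |].
    exfalso. apply Hno. exists j. split; [lia | exact Pj].
Qed.

Lemma pole_jump_of_tan_plus_continuous (G B : R -> R) c L nu :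
  1 <= c -> 0 < L -> nu * L = PI / 2 -> continuity_pt B nu ->
  (forall mu, G mu = c * tan (mu * L) + B mu) ->
  exists d, 0 < d /\ (forall mu, nu - d < mu < nu -> 0 < G mu) /\
                     (forall mu, nu < mu < nu + d -> G mu < 0).
Proof.
  intros Hc HL HnuL HBc HG.
  destruct (continuity_pt_locally_bounded B nu HBc) as [d1 [Hd1 HB]].
  set (M := Rabs (B nu) + 1). assert (HM : 0 < M) by (pose proof (Rabs_pos (B nu)); unfold M; lra).
  destruct (tan_left_of_PI2_large M HM) as [d2 [Hd2 Hleft]].
  destruct (tan_right_of_PI2_large M HM) as [d3 [Hd3 Hright]].
  assert (Hscale : forall e y, 0 < e -> 0 < y < e / L -> 0 < y * L < e).
  { intros e y He Hy. split; [nra |]. replace e with (e / L * L) by (field; lra).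
    apply Rmult_lt_compat_r; lra. }
  set (d := Rmin d1 (Rmin (d2 / L) (d3 / L))).
  assert (Hd : d <= d1 /\ d <= d2 / L /\ d <= d3 / L).
  { pose proof (Rmin_r d1 (Rmin (d2 / L) (d3 / L))).
    pose proof (Rmin_l (d2 / L) (d3 / L)). pose proof (Rmin_r (d2 / L) (d3 / L)).
    unfold d. split; [apply Rmin_l | lra]. }
  exists d. split; [| split].
  - unfold d. repeat apply Rmin_glb_lt; try apply Rdiv_lt_0_compat; lra.
  - intros mu Hmu. rewrite HG.
    assert (HBmu : Rabs (B mu) < M) by (apply HB; rewrite Rabs_left; lra).
    assert (HT : M < tan (mu * L)).
    { replace (mu * L) with (PI / 2 - (nu - mu) * L) by (rewrite <- HnuL; ring).
      apply Hleft, Hscale; [exact Hd2 | lra]. }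
    pose proof (Rabs_maj2 (B mu)). nra.
  - intros mu Hmu. rewrite HG.
    assert (HBmu : Rabs (B mu) < M) by (apply HB; rewrite Rabs_right; lra).
    assert (HT : tan (mu * L) < - M).
    { replace (mu * L) with (PI / 2 + (mu - nu) * L) by (rewrite <- HnuL; ring).
      apply Hright, Hscale; [exact Hd3 | lra]. }
    pose proof (Rle_abs (B mu)). nra.
Qed.

(* [spectral_position m l k n] is [eigen_count m l 0 (k ^ 2) n]. *)
Definition eigen_count (m : nat) (l : nat -> R) (a b : R) (n : nat) : Prop :=
  exists (lams : list R) (ds : list nat),
    NoDup lams /\
    (forall lam, In lam lams <-> (a <= lam < b /\ is_eigenvalue m l lam)) /\
    length ds = length lams /\
    (forall j, (j < length lams)%nat -> multiplicity m l (nth j lams 0) (nth j ds 0%nat)) /\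
    n = fold_right Nat.add 0%nat ds.

Lemma eigen_count_app m l a b c n1 n2 :
  a <= b -> b <= c -> eigen_count m l a b n1 -> eigen_count m l b c n2 ->
  eigen_count m l a c (n1 + n2).
Proof.
  intros Hab Hbc [L1 [D1 [N1 [I1 [E1 [M1 S1]]]]]] [L2 [D2 [N2 [I2 [E2 [M2 S2]]]]]].
  exists (L1 ++ L2), (D1 ++ D2). split; [| split; [| split; [| split]]].
  - apply NoDup_app; auto. intros x H1 H2. apply I1 in H1. apply I2 in H2. lra.
  - intros x. rewrite in_app_iff, I1, I2. split.
    + intros [[H H'] | [H H']]; split; auto; lra.
    + intros [H H']. destruct (Rlt_dec x b); [left | right]; split; auto; lra.
  - rewrite !length_app. lia.
  - intros j Hj. rewrite length_app in Hj. destruct (Nat.lt_ge_cases j (length L1)).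
    + rewrite !app_nth1 by lia. auto.
    + rewrite !app_nth2 by lia. rewrite E1. apply M2. lia.
  - subst n1 n2. symmetry. apply list_sum_app.
Qed.

Lemma eigen_count_none m l a b :
  (forall lam, a <= lam < b -> ~ is_eigenvalue m l lam) -> eigen_count m l a b 0.
Proof.
  intros H. exists nil, nil. split; [constructor |]. split; [| split; [reflexivity | split]].
  - intros lam. simpl. split; [tauto |]. intros [H1 H2]. exact (H _ H1 H2).
  - simpl. intros; lia.
  - reflexivity.
Qed.

Lemma eigen_count_single m l a b lam0 d :
  multiplicity m l lam0 d -> a <= lam0 < b ->
  (forall lam, a <= lam < b -> lam <> lam0 -> ~ is_eigenvalue m l lam) -> eigen_count m l a b d.
Proof.
  intros Hm Hlam H. pose proof (multiplicity_is_eigenvalue _ _ _ _ Hm) as He. destruct d as [|d].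
  - apply eigen_count_none. intros lam Hlam' Hev. destruct (Req_dec lam lam0) as [->|].
    + apply He in Hev. lia.
    + exact (H lam Hlam' ltac:(assumption) Hev).
  - exists (lam0 :: nil), (S d :: nil). split; [repeat constructor; simpl; tauto |].
    split; [| split; [reflexivity | split]].
    + intros lam. simpl. split.
      * intros [<- | []]. split; [exact Hlam | apply He; lia].
      * intros [H1 H2]. left. destruct (Req_dec lam0 lam); [assumption | exfalso].
        exact (H lam H1 ltac:(auto) H2).
    + intros j Hj. simpl in Hj. replace j with 0%nat by lia. exact Hm.
    + simpl. lia.
Qed.

Lemma sqrt_in_interval a b lam :
  0 <= a <= b -> a ^ 2 <= lam < b ^ 2 -> a <= sqrt lam < b /\ sqrt lam ^ 2 = lam.
Proof.
  intros Ha [H1 H2]. assert (Hlam : 0 <= lam) by nra. pose proof (sqrt_pos lam).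
  pose proof (pow2_sqrt lam Hlam). split; [split | assumption].
  - destruct (Rle_dec a (sqrt lam)) as [|Hn]; [assumption | exfalso].
    assert (sqrt lam * sqrt lam < a * a) by (apply Rmult_le_0_lt_compat; lra). simpl in *. lra.
  - destruct (Rlt_dec (sqrt lam) b) as [|Hn]; [assumption | exfalso].
    assert (b * b <= sqrt lam * sqrt lam) by (apply Rmult_le_compat; lra). simpl in *. lra.
Qed.

Lemma eigen_count_freq_none m l a b :
  0 <= a <= b -> (forall mu, a <= mu < b -> ~ is_eigenvalue m l (mu ^ 2)) ->
  eigen_count m l (a ^ 2) (b ^ 2) 0.
Proof.
  intros Ha H. apply eigen_count_none. intros lam Hlam.
  destruct (sqrt_in_interval a b lam Ha Hlam) as [Hs Hsq]. rewrite <- Hsq. apply H, Hs.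
Qed.

Lemma eigen_count_freq_single m l a b mu0 d :
  0 <= a <= mu0 -> mu0 < b -> multiplicity m l (mu0 ^ 2) d ->
  (forall mu, a <= mu < b -> mu <> mu0 -> ~ is_eigenvalue m l (mu ^ 2)) ->
  eigen_count m l (a ^ 2) (b ^ 2) d.
Proof.
  intros Ha Hb Hm H. apply (eigen_count_single m l _ _ (mu0 ^ 2) d Hm); [split; nra |].
  intros lam Hlam Hn. destruct (sqrt_in_interval a b lam ltac:(lra) Hlam) as [Hs Hsq].
  rewrite <- Hsq. apply H; [exact Hs |]. intros E. apply Hn. rewrite <- Hsq, E. reflexivity.
Qed.

Lemma eigen_count_freq_app m l a b c n1 n2 :
  0 <= a <= b -> b <= c ->
  eigen_count m l (a ^ 2) (b ^ 2) n1 -> eigen_count m l (b ^ 2) (c ^ 2) n2 ->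
  eigen_count m l (a ^ 2) (c ^ 2) (n1 + n2).
Proof. intros Hab Hbc. apply eigen_count_app; apply pow_incr; lra. Qed.

Definition poles_below (m : nat) (l : nat -> R) (t : R) : nat :=
  length (filter (fun i => if Rlt_dec (PI / 2) (t * l i) then true else false) (seq 0 m)).

Definition ind_pos (x : R) : nat := if Rlt_dec 0 x then 1%nat else 0%nat.

Lemma length_filter_split m (P Q S : nat -> bool) :
  (forall i, (i < m)%nat ->
     (P i = true <-> Q i = true \/ S i = true) /\ ~ (Q i = true /\ S i = true)) ->
  length (filter P (seq 0 m)) = (length (filter Q (seq 0 m)) + length (filter S (seq 0 m)))%nat.
Proof.
  induction m; intros H; [reflexivity |].
  rewrite !seq_S, !filter_app, !length_app, IHm by (intros; apply H; lia). simpl.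
  destruct (H m ltac:(lia)) as [H1 H2].
  destruct (P m), (Q m), (S m); simpl; intuition (try discriminate; lia).
Qed.

Definition no_pole (m : nat) (l : nat -> R) (mu : R) : Prop :=
  forall i, (i < m)%nat -> mu * l i <> PI / 2.

Section StarSpectrum.

Variables (m : nat) (l : nat -> R) (k : R).
Hypothesis Hm : (0 < m)%nat.
Hypothesis Hl : forall i, (i < m)%nat -> 0 < l i.
Hypothesis Hkl : forall i, (i < m)%nat -> k * l i < PI.

Lemma angle_range mu i : 0 <= mu <= k -> (i < m)%nat -> 0 <= mu * l i < PI.
Proof. intros Hmu Hi. specialize (Hl i Hi). specialize (Hkl i Hi). split; nra. Qed.

Lemma pole_lt_iff i mu : (i < m)%nat -> PI / 2 < mu * l i <-> PI / 2 / l i < mu.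
Proof.
  intros Hi. specialize (Hl i Hi). split; intros H.
  - apply (Rmult_lt_reg_r (l i)); [lra |]. field_simplify; lra.
  - replace (PI / 2) with (PI / 2 / l i * l i) at 1 by (field; lra).
    apply Rmult_lt_compat_r; lra.
Qed.

Lemma pole_eq_iff i mu : (i < m)%nat -> mu * l i = PI / 2 <-> mu = PI / 2 / l i.
Proof.
  intros Hi. specialize (Hl i Hi). split; intros H; [rewrite <- H | rewrite H]; field; lra.
Qed.

Lemma cos_no_pole mu :
  0 <= mu <= k -> no_pole m l mu -> forall i, (i < m)%nat -> cos (mu * l i) <> 0.
Proof. intros Hmu Hnp i Hi. apply cos_neq_0_half_turn; [apply angle_range | apply Hnp]; auto. Qed.

Lemma secular_increasing mu1 mu2 :
  0 <= mu1 -> mu1 < mu2 -> mu2 <= k -> (forall mu, mu1 <= mu <= mu2 -> no_pole m l mu) ->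
  secular m l mu1 < secular m l mu2.
Proof.
  intros H1 H12 H2 Hnp. apply sumR_lt; [exact Hm |]. intros i Hi.
  pose proof (angle_range mu2 i ltac:(lra) Hi). pose proof (Hl i Hi).
  apply tan_lt_same_branch; [nra | nra | lra |]. intros [A B].
  refine (Hnp (PI / 2 / l i) _ i Hi _); [split | field; lra].
  - apply (Rmult_le_reg_r (l i)); [lra |]. field_simplify; lra.
  - apply (Rmult_le_reg_r (l i)); [lra |]. field_simplify; lra.
Qed.

Lemma secular_continuity_pt mu :
  0 <= mu <= k -> no_pole m l mu -> continuity_pt (secular m l) mu.
Proof.
  intros Hmu Hnp. apply (sumR_continuity_pt m (fun i y => tan (y * l i))).
  intros i Hi. apply continuity_pt_tan_scal, cos_no_pole; auto.
Qed.

(* All edges with a pole at [nu] have the same length [l j], so near [nu] the secular function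
   is [c * tan (mu * l j)], [c] counting these edges, plus a term continuous at [nu]. *)
Lemma secular_pole_jump nu j :
  0 < nu <= k -> (j < m)%nat -> nu * l j = PI / 2 ->
  exists d, 0 < d /\ (forall mu, nu - d < mu < nu -> 0 < secular m l mu) /\
                     (forall mu, nu < mu < nu + d -> secular m l mu < 0).
Proof.
  intros Hnu Hj Hpj.
  set (c := sumR m (fun i => if poleb nu l i then 1 else 0)).
  set (B := fun mu => sumR m (fun i => if poleb nu l i then 0 else tan (mu * l i))).
  assert (Hpoleb : forall i, (i < m)%nat -> poleb nu l i = true -> l i = l j).
  { intros i Hi. unfold poleb. destruct (Req_dec_T (nu * l i) (PI / 2)) as [E|]; [| discriminate].
    intros _. apply (Rmult_eq_reg_l nu); lra. }
  apply (pole_jump_of_tan_plus_continuous (secular m l) B c (l j) nu);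
    [| apply Hl, Hj | exact Hpj | |].
  - unfold c. replace 1 with (if poleb nu l j then 1 else 0) at 1.
    + apply (sumR_ge_term m (fun i => if poleb nu l i then 1 else 0)); [| exact Hj].
      intros i _. destruct (poleb nu l i); lra.
    + unfold poleb. destruct (Req_dec_T (nu * l j) (PI / 2)); [reflexivity | contradiction].
  - apply (sumR_continuity_pt m (fun i y => if poleb nu l i then 0 else tan (y * l i))).
    intros i Hi. unfold poleb. destruct (Req_dec_T (nu * l i) (PI / 2)) as [|E].
    + apply continuity_pt_const. intros a b. reflexivity.
    + apply continuity_pt_tan_scal, cos_neq_0_half_turn; [apply angle_range; auto; lra | exact E].
  - intros mu. unfold secular, B, c. rewrite Rmult_comm, <- sumR_scal_l, <- sumR_plus.
    apply sumR_ext. intros i Hi. destruct (poleb nu l i) eqn:E; [rewrite (Hpoleb i Hi E) |]; ring.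
Qed.

Lemma not_eigenvalue_off_roots mu :
  0 < mu <= k -> no_pole m l mu -> secular m l mu <> 0 -> ~ is_eigenvalue m l (mu ^ 2).
Proof.
  intros Hmu Hnp HF Hev.
  assert (Hmult : multiplicity m l (mu ^ 2) 0).
  { apply multiplicity_regular_nonroot; auto; [intros i Hi; left; auto | | lra].
    apply cos_no_pole; auto; lra. }
  apply (multiplicity_is_eigenvalue _ _ _ _ Hmult) in Hev. lia.
Qed.

Lemma multiplicity_root mu :
  0 <= mu <= k -> no_pole m l mu -> secular m l mu = 0 -> multiplicity m l (mu ^ 2) 1.
Proof.
  intros Hmu Hnp HF. apply multiplicity_regular_root; auto; [intros i Hi; left; auto |].
  apply cos_no_pole; auto.
Qed.

Lemma multiplicity_at_pole nu j0 js :
  0 < nu <= k -> filter (poleb nu l) (seq 0 m) = j0 :: js ->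
  multiplicity m l (nu ^ 2) (length js).
Proof.
  intros Hnu HP. apply (multiplicity_pole m l nu j0 js); [intros i Hi; left; auto | | exact HP].
  intros i Hi Hn. apply cos_neq_0_half_turn; [apply angle_range; auto; lra | exact Hn].
Qed.

Lemma last_pole_below t :
  0 < t -> no_pole m l t -> (exists i, (i < m)%nat /\ PI / 2 < t * l i) ->
  exists nu j, (j < m)%nat /\ nu * l j = PI / 2 /\ 0 < nu < t /\
               forall mu, nu < mu <= t -> no_pole m l mu.
Proof.
  intros Ht Hnp Hex.
  destruct (finite_argmax (fun i => PI / 2 / l i) (fun i => PI / 2 < t * l i) m Hex)
    as [j [Hj [Pj Hmax]]].
  pose proof PI_RGT_0. pose proof (Hl j Hj).
  exists (PI / 2 / l j), j. split; [exact Hj | split; [apply pole_eq_iff; auto | split]].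
  - split; [apply Rdiv_lt_0_compat; lra | apply pole_lt_iff; auto].
  - intros mu Hmu i Hi E. destruct (Req_dec mu t) as [->|Hne]; [exact (Hnp i Hi E) |].
    apply pole_eq_iff in E; [| exact Hi].
    assert (PI / 2 < t * l i) by (apply pole_lt_iff; [exact Hi | lra]).
    specialize (Hmax i Hi ltac:(assumption)). simpl in Hmax. lra.
Qed.

Lemma isolated_pole nu j :
  0 < nu <= k -> (j < m)%nat -> nu * l j = PI / 2 ->
  exists s e, 0 < s < nu /\ 0 < e /\ (forall mu, s <= mu < nu -> no_pole m l mu) /\
              0 < secular m l s /\ forall mu, nu < mu < nu + e -> secular m l mu < 0.
Proof.
  intros Hnu Hj Hpj.
  destruct (finite_isolation (fun i => PI / 2 / l i) nu m) as [eps [Heps Hiso]].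
  destruct (secular_pole_jump nu j Hnu Hj Hpj) as [d [Hd [Hleft Hright]]].
  set (eta := Rmin eps (Rmin d nu) / 2).
  assert (Heta : 0 < eta /\ eta < eps /\ eta < d /\ eta < nu).
  { pose proof (Rmin_l eps (Rmin d nu)). pose proof (Rmin_r eps (Rmin d nu)).
    pose proof (Rmin_l d nu). pose proof (Rmin_r d nu).
    assert (0 < Rmin eps (Rmin d nu)) by (repeat apply Rmin_glb_lt; lra). unfold eta. lra. }
  exists (nu - eta), d. split; [lra | split; [exact Hd | split; [| split]]].
  - intros mu Hmu i Hi E. apply pole_eq_iff in E; [| exact Hi].
    specialize (Hiso i Hi). simpl in Hiso. rewrite <- E in Hiso.
    assert (Hfar : eps <= Rabs (mu - nu)) by (apply Hiso; lra).
    rewrite Rabs_left in Hfar by lra. lra.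
  - apply Hleft. lra.
  - exact Hright.
Qed.

Lemma poles_below_across s nu t :
  0 < s < nu -> nu < t ->
  (forall mu, s <= mu < nu -> no_pole m l mu) -> (forall mu, nu < mu <= t -> no_pole m l mu) ->
  poles_below m l t = (poles_below m l s + length (filter (poleb nu l) (seq 0 m)))%nat.
Proof.
  intros Hs Hnt Hbefore Hafter. apply length_filter_split. intros i Hi.
  set (p := PI / 2 / l i).
  assert (Hp1 : ~ (s <= p < nu)) by (intros Hp; apply (Hbefore p Hp i Hi), pole_eq_iff; auto).
  assert (Hp2 : ~ (nu < p <= t)) by (intros Hp; apply (Hafter p Hp i Hi), pole_eq_iff; auto).
  unfold poleb.
  destruct (Rlt_dec (PI / 2) (t * l i)) as [Ht|Ht], (Rlt_dec (PI / 2) (s * l i)) as [Hs'|Hs'],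
           (Req_dec_T (nu * l i) (PI / 2)) as [E|E];
    rewrite pole_lt_iff in Ht, Hs' by exact Hi; rewrite pole_eq_iff in E by exact Hi;
    fold p in Ht, Hs', E;
    split; intuition (try discriminate; lra).
Qed.

Lemma count_before_pole s nu :
  0 < s < nu -> nu <= k -> (forall mu, s <= mu < nu -> no_pole m l mu) -> 0 < secular m l s ->
  eigen_count m l (s ^ 2) (nu ^ 2) 0.
Proof.
  intros Hs Hnu Hnp HFs. apply eigen_count_freq_none; [lra |]. intros mu Hmu.
  apply not_eigenvalue_off_roots; auto; [lra |].
  destruct (Req_dec s mu) as [<-|Hne]; [lra |].
  assert (secular m l s < secular m l mu)
    by (apply secular_increasing; auto; try lra; intros; apply Hnp; lra).
  lra.
Qed.

Lemma count_from_pole nu t j0 js e :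
  0 < nu < t -> t <= k -> filter (poleb nu l) (seq 0 m) = j0 :: js ->
  (forall mu, nu < mu <= t -> no_pole m l mu) ->
  0 < e -> (forall mu, nu < mu < nu + e -> secular m l mu < 0) ->
  eigen_count m l (nu ^ 2) (t ^ 2) (length js + ind_pos (secular m l t)).
Proof.
  intros Hnu Htk HP Hnp He Hright.
  assert (Hmult : multiplicity m l (nu ^ 2) (length js))
    by (apply (multiplicity_at_pole nu j0 js); [lra | exact HP]).
  assert (Hincr : forall a b, nu < a -> a < b -> b <= t -> secular m l a < secular m l b)
    by (intros a b Ha Hab Hb; apply secular_increasing; auto; try lra; intros; apply Hnp; lra).
  assert (Hnoeig : forall mu, nu < mu <= t -> secular m l mu <> 0 -> ~ is_eigenvalue m l (mu ^ 2))
    by (intros mu Hmu; apply not_eigenvalue_off_roots; auto; lra).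
  unfold ind_pos. destruct (Rlt_dec 0 (secular m l t)) as [Hpos|Hneg].
  - (* [secular m l] has exactly one root in [(nu, t)] *)
    set (r := nu + Rmin e (t - nu) / 2).
    assert (Hr : nu < r < t /\ r < nu + e).
    { pose proof (Rmin_l e (t - nu)). pose proof (Rmin_r e (t - nu)).
      assert (0 < Rmin e (t - nu)) by (apply Rmin_glb_lt; lra). unfold r. lra. }
    destruct (Ranalysis5.IVT_interv (secular m l) r t) as [z [Hz HFz]];
      [| lra | apply Hright; lra | exact Hpos |].
    { intros a Ha. apply secular_continuity_pt; auto; [lra | apply Hnp; lra]. }
    assert (Hzt : z < t) by (destruct (Req_dec z t) as [->|]; lra).
    apply (eigen_count_freq_app m l nu z t); [lra | lra | |].
    + apply (eigen_count_freq_single m l nu z nu); [lra | lra | exact Hmult |].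
      intros mu Hmu Hne. apply Hnoeig; [lra |].
      assert (secular m l mu < secular m l z) by (apply Hincr; lra). lra.
    + apply (eigen_count_freq_single m l z t z); [lra | lra | |].
      * apply multiplicity_root; [lra | apply Hnp; lra | exact HFz].
      * intros mu Hmu Hne. apply Hnoeig; [lra |].
        assert (secular m l z < secular m l mu) by (apply Hincr; lra). lra.
  - rewrite Nat.add_0_r. apply (eigen_count_freq_single m l nu t nu); [lra | lra | exact Hmult |].
    intros mu Hmu Hne. apply Hnoeig; [lra |].
    assert (secular m l mu < secular m l t) by (apply Hincr; lra). lra.
Qed.

Lemma count_without_poles t :
  0 < t <= k -> no_pole m l t -> (forall i, (i < m)%nat -> ~ PI / 2 < t * l i) ->
  eigen_count m l 0 (t ^ 2) (poles_below m l t + ind_pos (secular m l t)).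
Proof.
  intros Ht Hnp Hno.
  assert (Hangle : forall mu i, 0 < mu <= t -> (i < m)%nat -> 0 < mu * l i < PI / 2).
  { intros mu i Hmu Hi. specialize (Hno i Hi). specialize (Hnp i Hi). specialize (Hl i Hi).
    split; [nra |]. assert (t * l i < PI / 2) by lra. nra. }
  assert (Hpos : forall mu, 0 < mu <= t -> 0 < secular m l mu).
  { intros mu Hmu. apply sumR_gt0; [exact Hm |]. intros i Hi.
    apply tan_gt_0; apply Hangle; auto. }
  assert (Hq : poles_below m l t = 0%nat).
  { unfold poles_below. rewrite (filter_ext_in _ (fun _ => false)), filter_false; [reflexivity |].
    intros i Hi. apply in_seq in Hi. destruct (Rlt_dec (PI / 2) (t * l i)); [| reflexivity].
    exfalso. apply (Hno i); [lia | assumption]. }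
  unfold ind_pos. rewrite Hq.
  destruct (Rlt_dec 0 (secular m l t)) as [_|Hn]; [| exfalso; apply Hn, Hpos; lra].
  replace 0 with (0 ^ 2) at 1 by ring.
  (* the only eigenvalue below [t^2] is 0, with the constant eigenfunction *)
  apply (eigen_count_freq_single m l 0 t 0 1); [lra | lra | |].
  - apply multiplicity_root; auto; [lra | |].
    + intros i Hi E. rewrite Rmult_0_l in E. pose proof PI_RGT_0. lra.
    + apply sumR_eq0. intros i Hi. rewrite Rmult_0_l. apply tan_0.
  - intros mu Hmu Hne. apply not_eigenvalue_off_roots; auto; [lra | |].
    + intros i Hi E. pose proof (Hangle mu i ltac:(lra) Hi). lra.
    + pose proof (Hpos mu ltac:(lra)). lra.
Qed.

(* Induction on the number of poles below [t], cutting at the last one. *)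
Lemma eigen_count_below t :
  0 < t <= k -> no_pole m l t ->
  eigen_count m l 0 (t ^ 2) (poles_below m l t + ind_pos (secular m l t)).
Proof.
  remember (poles_below m l t) as q eqn:Hq. revert t Hq.
  induction q as [q IH] using lt_wf_ind. intros t Hq Ht Hnp. subst q.
  destruct (classic (exists i, (i < m)%nat /\ PI / 2 < t * l i)) as [Hex | Hno].
  2:{ apply count_without_poles; auto. intros i Hi H. apply Hno. eauto. }
  destruct (last_pole_below t ltac:(lra) Hnp Hex) as [nu [j [Hj [Hpj [Hnu Hafter]]]]].
  destruct (isolated_pole nu j ltac:(lra) Hj Hpj) as [s [e [Hs [He [Hbefore [HFs Hright]]]]]].
  assert (Hsplit := poles_below_across s nu t Hs ltac:(lra) Hbefore Hafter).
  destruct (filter (poleb nu l) (seq 0 m)) as [|j0 js] eqn:HP.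
  { exfalso. assert (Hin : In j (filter (poleb nu l) (seq 0 m))).
    { apply filter_In. split; [apply in_seq; lia |]. unfold poleb.
      destruct (Req_dec_T (nu * l j) (PI / 2)); [reflexivity | contradiction]. }
    rewrite HP in Hin. exact Hin. }
  assert (HS : eigen_count m l 0 (s ^ 2) (poles_below m l s + 1)).
  { assert (Hind : ind_pos (secular m l s) = 1%nat)
      by (unfold ind_pos; destruct (Rlt_dec 0 (secular m l s)); [reflexivity | lra]).
    rewrite <- Hind at 2.
    apply (IH (poles_below m l s));
      [simpl in Hsplit; lia | reflexivity | lra | apply Hbefore; lra]. }
  replace (poles_below m l t + ind_pos (secular m l t))%nat
    with (poles_below m l s + 1 + (0 + (length js + ind_pos (secular m l t))))%nat
    by (simpl in Hsplit; lia).
  apply eigen_count_app with (s ^ 2); [apply pow_le; lra | apply pow_incr; lra | exact HS |].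
  apply (eigen_count_freq_app m l s nu t); [lra | lra | |].
  - apply count_before_pole; auto; lra.
  - apply (count_from_pole nu t j0 js e); auto; lra.
Qed.

Lemma spectral_position_at_root :
  0 < k -> no_pole m l k -> secular m l k = 0 -> spectral_position m l k (poles_below m l k).
Proof.
  intros Hk Hnp HF. pose proof (eigen_count_below k ltac:(lra) Hnp) as H.
  unfold ind_pos in H. rewrite HF in H. destruct (Rlt_dec 0 0); [lra |].
  rewrite Nat.add_0_r in H. exact H.
Qed.

End StarSpectrum.

Lemma short_edges m l k f :
  (forall i, (i < m)%nat -> 0 < l i) -> 0 < k -> eig_solution m l (k ^ 2) f ->
  (forall i, (i < m)%nat -> - Derive (f i) (l i) <> 0) -> no_neumann_points m l f ->
  forall i, (i < m)%nat -> k * l i < PI.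
Proof.
  intros Hl Hk Hf Hfd Hnn i Hi. pose proof (Hl i Hi). pose proof PI_RGT_0.
  destruct (eig_solution_cos m l k f ltac:(intros j Hj; left; auto) Hf) as [Hcos _].
  destruct (Rlt_or_le (k * l i) PI) as [|Hge]; [assumption | exfalso].
  (* [f i] has a critical point at [PI / k], which lies in [(0, l i]] *)
  assert (Hx : 0 < PI / k <= l i).
  { split; [apply Rdiv_lt_0_compat; lra |].
    apply (Rmult_le_reg_l k); [lra |]. replace (k * (PI / k)) with PI by (field; lra). lra. }
  assert (Hcrit : Derive (f i) (PI / k) = 0).
  { rewrite (proj2 (Hcos i (PI / k) Hi ltac:(lra))). replace (k * (PI / k)) with PI by (field; lra).
    rewrite sin_PI. ring. }
  destruct (Req_dec (PI / k) (l i)) as [E|E].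
  - apply (Hfd i Hi). rewrite <- E, Hcrit. ring.
  - apply (Hnn i (PI / k)). repeat split; auto; lra.
Qed.

Lemma secular_root_of_eigenfunction m l k f :
  (0 < m)%nat -> (forall i, (i < m)%nat -> 0 <= l i) -> 0 < k -> eig_solution m l (k ^ 2) f ->
  (forall i, (i < m)%nat -> f i 0 <> 0) -> (forall i, (i < m)%nat -> f i (l i) <> 0) ->
  no_pole m l k /\ secular m l k = 0.
Proof.
  intros Hm Hl Hk Hf Hf0 Hfl.
  destruct (eig_solution_cos m l k f Hl Hf) as [Hform Hamp].
  assert (Hcos : forall i, (i < m)%nat -> cos (k * l i) <> 0).
  { intros i Hi E. apply (Hfl i Hi). specialize (Hl i Hi).
    rewrite (proj1 (Hform i (l i) Hi ltac:(lra))), E. ring. }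
  split; [intros i Hi E; apply (Hcos i Hi); rewrite E; apply cos_PI2 |].
  destruct (amplitude_conditions_regular m l k _ Hm Hcos Hamp) as [_ H0].
  apply Rmult_integral in H0 as [H0 | H0]; [exfalso | exact H0].
  apply Rmult_integral in H0 as [H0 | H0]; [| lra].
  apply Rmult_integral in H0 as [H0 | H0]; [exact (Hf0 0%nat Hm H0) | exact (Hcos 0%nat Hm H0)].
Qed.

Lemma generic_eigenfunction_of_secular_root m l k :
  star_graph m l -> 0 < k -> (forall i, (i < m)%nat -> k * l i < PI) ->
  no_pole m l k -> secular m l k = 0 ->
  generic_eigenfunction m l (k ^ 2) (fun i x => / cos (k * l i) * cos (k * x)) /\
  no_neumann_points m l (fun i x => / cos (k * l i) * cos (k * x)).
Proof.
  intros [Hm2 Hl] Hk Hkl Hnp HF. assert (Hm : (0 < m)%nat) by lia.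
  assert (Hcos : forall i, (i < m)%nat -> cos (k * l i) <> 0)
    by (apply (cos_no_pole m l k); auto; lra).
  assert (Hinv : forall i, (i < m)%nat -> / cos (k * l i) <> 0)
    by (intros; apply Rinv_neq_0_compat; auto).
  assert (Hsin : forall i x, (i < m)%nat -> 0 < x <= l i -> 0 < sin (k * x)).
  { intros i x Hi Hx. specialize (Hkl i Hi). apply sin_gt_0; nra. }
  assert (Hamp : amplitude_conditions m l k (fun i => / cos (k * l i))).
  { split.
    - intros i j Hi Hj. rewrite !Rinv_l; auto.
    - transitivity (k * secular m l k); [| rewrite HF; ring].
      unfold secular. rewrite <- sumR_scal_l.
      apply sumR_ext. intros i Hi. unfold tan. field. auto. }
  assert (HD : forall i x, Derive (fun y => / cos (k * l i) * cos (k * y)) x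
                           = - / cos (k * l i) * k * sin (k * x))
    by (intros; apply Derive_scal_cos).
  split; [split; [split; [apply eig_solution_of_amplitudes, Hamp |] |
                  split; [| split; [| split]]] |].
  - exists 0%nat, 0. split; [exact Hm | split; [pose proof (Hl 0%nat Hm); lra |]].
    rewrite Rmult_0_r, cos_0, Rmult_1_r. auto.
  - apply multiplicity_regular_root; auto. intros i Hi. left. auto.
  - intros i Hi. rewrite Rmult_0_r, cos_0, Rmult_1_r. auto.
  - intros i Hi. rewrite Rinv_l by auto. apply R1_neq_R0.
  - intros i Hi. rewrite HD. specialize (Hsin i (l i) Hi ltac:(pose proof (Hl i Hi); lra)).
    replace (- (- / cos (k * l i) * k * sin (k * l i)))
      with (/ cos (k * l i) * k * sin (k * l i)) by ring.
    repeat apply Rmult_integral_contrapositive_currified; auto; lra.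
  - intros i x [Hi [Hx E]]. rewrite HD in E. specialize (Hsin i x Hi ltac:(lra)).
    apply Rmult_integral in E as [E | E]; [| lra].
    apply Rmult_integral in E as [E | E]; [| lra]. apply (Hinv i Hi). lra.
Qed.

Section Reflection.

Variables (m : nat) (l : nat -> R) (k : R).
Hypothesis Hk : 0 < k.

Let l' i := PI / k - l i.

Lemma reflected_angle i : k * l' i = PI - k * l i.
Proof. unfold l'. field. lra. Qed.

(* [tan (PI - x) = - tan x]: reflection flips the secular function and preserves its roots. *)
Lemma reflected_secular_root :
  (forall i, (i < m)%nat -> 0 < l i) -> (forall i, (i < m)%nat -> k * l i < PI) ->
  no_pole m l k -> secular m l k = 0 ->
  (forall i, (i < m)%nat -> 0 < l' i) /\ (forall i, (i < m)%nat -> k * l' i < PI) /\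
  no_pole m l' k /\ secular m l' k = 0.
Proof.
  intros Hl Hkl Hnp HF.
  assert (Hangle : forall i, (i < m)%nat -> 0 < k * l' i < PI).
  { intros i Hi. rewrite reflected_angle. specialize (Hkl i Hi). specialize (Hl i Hi). nra. }
  split; [intros i Hi; specialize (Hangle i Hi); nra |].
  split; [intros i Hi; apply Hangle, Hi |].
  split; [intros i Hi E; rewrite reflected_angle in E; apply (Hnp i Hi); lra |].
  transitivity (- secular m l k); [| rewrite HF; ring].
  unfold secular. rewrite <- sumR_opp. apply sumR_ext. intros i _.
  rewrite reflected_angle. apply tan_PI_minus.
Qed.

Lemma poles_below_reflected :
  no_pole m l k -> (poles_below m l k + poles_below m l' k)%nat = m.
Proof.
  intros Hnp. unfold poles_below.
  rewrite <- (length_seq m 0) at 3.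
  rewrite <- (filter_length
                (fun i => if Rlt_dec (PI / 2) (k * l i) then true else false) (seq 0 m)).
  do 2 f_equal. apply filter_ext_in. intros i Hi. apply in_seq in Hi.
  specialize (Hnp i ltac:(lia)). rewrite reflected_angle.
  destruct (Rlt_dec (PI / 2) (k * l i)), (Rlt_dec (PI / 2) (PI - k * l i)); simpl; auto; lra.
Qed.

Lemma wavelength_capacity_reflected :
  wavelength_capacity m l k + wavelength_capacity m l' k = INR m.
Proof.
  assert (Hlen : total_length m l + total_length m l' = INR m * (PI / k)).
  { unfold total_length, l'. rewrite <- sumR_plus, <- sumR_const. apply sumR_ext. intros. ring. }
  pose proof PI_RGT_0. unfold wavelength_capacity.
  replace (total_length m l) with (INR m * (PI / k) - total_length m l') by lra.
  field. lra.
Qed.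

End Reflection.

Theorem lemma3p2 (m : nat) (l : nat -> R) (k : R) (f : nat -> R -> R) :
  star_graph m l ->
  0 < k ->
  generic_eigenfunction m l (k ^ 2) f ->
  no_neumann_points m l f ->
  exists (m' : nat) (l' : nat -> R),
    star_graph m' l' /\
    num_boundary m = num_boundary m' /\
    (exists f' : nat -> R -> R,
        generic_eigenfunction m' l' (k ^ 2) f' /\
        no_neumann_points m' l' f') /\
    (exists n n' : nat,
        spectral_position m l k n /\ spectral_position m' l' k n' /\
        (n + n')%nat = num_boundary m) /\
    wavelength_capacity m l k + wavelength_capacity m' l' k = INR (num_boundary m).
Proof.
  intros [Hm2 Hl] Hk [[Hf _] [_ [Hf0 [Hfl Hfd]]]] Hnn.
  assert (Hm : (0 < m)%nat) by lia.
  assert (Hkl := short_edges m l k f Hl Hk Hf Hfd Hnn).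
  destruct (secular_root_of_eigenfunction m l k f Hm ltac:(intros i Hi; left; auto) Hk Hf Hf0 Hfl)
    as [Hnp HF].
  set (l' := fun i => PI / k - l i).
  destruct (reflected_secular_root m l k Hk Hl Hkl Hnp HF) as [Hl' [Hkl' [Hnp' HF']]].
  exists m, l'. split; [split; auto | split; [reflexivity | split; [| split]]].
  - eexists. apply generic_eigenfunction_of_secular_root; auto. split; auto.
  - exists (poles_below m l k), (poles_below m l' k).
    split; [| split];
      [apply spectral_position_at_root; auto .. | apply poles_below_reflected; auto].
  - apply wavelength_capacity_reflected, Hk.
Qed.
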